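(* Let $X=(S,g_1^0,g_2^0,g_3^0,D_1,D_2,D_3,\xi)\in\mathrm{MC}_{\mathrm{normal}}$ with associated $u>0$, and set $D_1'=D_1-\tfrac{2g_3^4}{u-2}D_2+\tfrac{2u\,g_2^3}{2u-1}D_3$, where $g_3^4=-c_{31}^1+D_3(\xi)$ and $g_2^3=-c_{12}^1-D_2(\xi)$. (i) If $0<u<1$ and $u\neq\tfrac12$ everywhere, then with $\bar u=\tfrac1u-1$, $$T(X)=\Big(S,\tfrac12,-\tfrac12(1+\bar u),-\tfrac12(1+\tfrac1{\bar u}),\tfrac1{1-u}D_2,\tfrac1{1-u}D_3,\tfrac1{1-u}D_1',\xi+\log\tfrac1{1-u}\Big)\in\mathrm{MC}_{\mathrm{pre}}.$$ (ii) If $u>1$ and $u\neq2$ everywhere, then with $\bar u=u-1$, $$T(X)=\Big(S,\tfrac12,-\tfrac12(1+\bar u),-\tfrac12(1+\tfrac1{\bar u}),\tfrac u{u-1}D_3,\tfrac u{u-1}D_2,\tfrac u{u-1}D_1',\xi+\log\tfrac u{u-1}\Big)\in\mathrm{MC}_{\mathrm{pre}}.$$ Consequently $\mathcal{B}(X)=\mathcal{N}(T(X))$, defined whenever $\mathcal{N}(T(X))$ is defined, is a partial map $\mathcal{B}:\mathrm{MC}_{\mathrm{normal}}\nrightarrow\mathrm{MC}_{\mathrm{normal}}$.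
   Context: ''Cyclic $(i,j,k)$'' means $(i,j,k)\in\{(1,2,3),(2,3,1),(3,1,2)\}$. Let $S$ be a smooth manifold diffeomorphic to $\mathbb{R}^3$ and $D_1,D_2,D_3$ a frame of vector fields on $S$; its structure functions $c_{jk}^i\in C^\infty(S,\mathbb{R})$ are defined by $[D_j,D_k]=\sum_{i=1}^3c_{jk}^iD_i$. $\mathrm{MC}_{\mathrm{pre}}$ is the set of tuples $(S,g_1^0,g_2^0,g_3^0,D_1,D_2,D_3,\xi)$ with $g_i^0,\xi\in C^\infty(S,\mathbb{R})$ satisfying (E1) $0=g_2^0g_3^0+g_3^0g_1^0+g_1^0g_2^0$, and (E2) $0=D_i(g_j^0+g_k^0)+c_{ij}^j(g_i^0-g_j^0)+c_{ik}^k(g_i^0-g_k^0)-2D_i(\xi)g_i^0$ for all cyclic $(i,j,k)$. $\mathrm{MC}_{\mathrm{normal}}\subset\mathrm{MC}_{\mathrm{pre}}$ consists of the tuples with $(g_1^0,g_2^0,g_3^0)=\tfrac12(1,-1-u,-1-\tfrac1u)$ for some $u\in C^\infty(S,\mathbb{R})$, $u>0$, and with $c_{23}^1=-2$. The normalization $\mathcal{N}:\mathrm{MC}_{\mathrm{pre}}\nrightarrow\mathrm{MC}_{\mathrm{normal}}$ is defined on tuples with $g_1^0>0$, $g_2^0<0$, $g_3^0<0$, $c_{23}^1\neq0$ everywhere, and maps such a tuple to the unique tuple in $\mathrm{MC}_{\mathrm{normal}}$ of the form $\big(S,Ag_1^0,Ag_2^0,Ag_3^0,\sigma AB^{g_2^0+g_3^0}D_1,\sigma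 AB^{g_3^0+g_1^0}D_2,\sigma AB^{g_1^0+g_2^0}D_3,\xi+\log A+(g_1^0+g_2^0+g_3^0)\log B\big)$ with $A,B\in C^\infty(S,\mathbb{R})$ positive and $\sigma\in\{\pm1\}$ (here $B^f=e^{f\log B}$). *)

(* classical reals. S is modelled as R^3 itself (S is
   diffeomorphic to R^3, and everything is invariant under diffeomorphism). *)
From Stdlib Require Import Reals ClassicalEpsilon.
Open Scope R_scope.

Inductive i3 : Type := I1 | I2 | I3.

Definition i3_eqb (a b : i3) : bool :=
  match a, b with
  | I1, I1 | I2, I2 | I3, I3 => true
  | _, _ => false
  end.

(* cyclic successor: (i, next i, next (next i)) runs over the cyclic triples *)
Definition next (i : i3) : i3 :=
  match i with I1 => I2 | I2 => I3 | I3 => I1 end.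

Definition sum3 (f : i3 -> R) : R := f I1 + f I2 + f I3.

Definition pt := i3 -> R.

Definition upd (x : pt) (i : i3) (t : R) : pt :=
  fun j => if i3_eqb j i then t else x j.

Definition has_partial (i : i3) (f : pt -> R) (x : pt) (l : R) : Prop :=
  derivable_pt_lim (fun t => f (upd x i t)) (x i) l.

Definition pd (i : i3) (f : pt -> R) (x : pt) : R :=
  epsilon (inhabits 0) (fun l => has_partial i f x l).

Definition cont3 (f : pt -> R) : Prop :=
  forall x eps, 0 < eps -> exists delta, 0 < delta /\
    forall y, (forall i, Rabs (y i - x i) < delta) -> Rabs (f y - f x) < eps.

Fixpoint Ck (n : nat) (f : pt -> R) : Prop :=
  match n with
  | O => cont3 f
  | S m => cont3 f /\ forall i, (forall x, exists l, has_partial i f x l) /\ Ck m (pd i f)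
  end.

Definition smooth (f : pt -> R) : Prop := forall n, Ck n f.

(* vector fields: V i x is the i-th coordinate component at x *)
Definition vf := i3 -> pt -> R.

Definition smooth_vf (V : vf) : Prop := forall i, smooth (V i).

Definition app (V : vf) (f : pt -> R) : pt -> R :=
  fun x => sum3 (fun i => V i x * pd i f x).

Definition scale (s : pt -> R) (V : vf) : vf := fun i x => s x * V i x.

Definition frame (D : i3 -> vf) : Prop :=
  forall (x : pt) (a : i3 -> R),
    (forall i, sum3 (fun j => a j * D j i x) = 0) -> forall j, a j = 0.

(* c j k i = c_{jk}^i : [D_j, D_k] = sum_i c_{jk}^i D_i *)
Definition is_struct (D : i3 -> vf) (c : i3 -> i3 -> i3 -> pt -> R) : Prop :=
  (forall j k i, smooth (c j k i)) /\
  forall j k (f : pt -> R), smooth f -> forall x,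
    app (D j) (app (D k) f) x - app (D k) (app (D j) f) x
    = sum3 (fun i => c j k i x * app (D i) f x).

(* tuples (S, g1, g2, g3, D1, D2, D3, xi) *)
Record MC : Type := mkMC { mg : i3 -> pt -> R; mD : i3 -> vf; mxi : pt -> R }.

Definition E1 (X : MC) (x : pt) : Prop :=
  0 = mg X I2 x * mg X I3 x + mg X I3 x * mg X I1 x + mg X I1 x * mg X I2 x.

Definition E2 (X : MC) (c : i3 -> i3 -> i3 -> pt -> R) (i : i3) (x : pt) : Prop :=
  let j := next i in let k := next j in
  0 = app (mD X i) (fun y => mg X j y + mg X k y) x
      + c i j j x * (mg X i x - mg X j x)
      + c i k k x * (mg X i x - mg X k x)
      - 2 * app (mD X i) (mxi X) x * mg X i x.

Definition MC_pre (X : MC) : Prop :=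
  (forall i, smooth (mg X i)) /\ smooth (mxi X) /\
  (forall i, smooth_vf (mD X i)) /\ frame (mD X) /\
  (forall x, E1 X x) /\
  exists c, is_struct (mD X) c /\ forall i x, E2 X c i x.

Definition MC_normal (X : MC) : Prop :=
  MC_pre X /\
  (exists u : pt -> R, smooth u /\ (forall x, 0 < u x) /\
     forall x, mg X I1 x = 1/2 /\ mg X I2 x = 1/2 * (-1 - u x)
               /\ mg X I3 x = 1/2 * (-1 - / u x)) /\
  (forall c, is_struct (mD X) c -> forall x, c I2 I3 I1 x = -2).

Definition rpow (b e : R) : R := exp (e * ln b).

(* N_rel Y Z : Y is in the domain of the normalization N and N(Y) = Z *)
Definition N_rel (Y Z : MC) : Prop :=
  (forall x, 0 < mg Y I1 x /\ mg Y I2 x < 0 /\ mg Y I3 x < 0) /\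
  (forall c, is_struct (mD Y) c -> forall x, c I2 I3 I1 x <> 0) /\
  exists (A B : pt -> R) (sigma : R),
    smooth A /\ smooth B /\ (forall x, 0 < A x /\ 0 < B x) /\
    (sigma = 1 \/ sigma = -1) /\
    (forall i x, mg Z i x = A x * mg Y i x) /\
    (forall i j x, mD Z i j x =
       sigma * A x * rpow (B x) (mg Y (next i) x + mg Y (next (next i)) x)
       * mD Y i j x) /\
    (forall x, mxi Z x = mxi Y x + ln (A x)
                        + (mg Y I1 x + mg Y I2 x + mg Y I3 x) * ln (B x)) /\
    MC_normal Z.

Definition g34 (X : MC) (c : i3 -> i3 -> i3 -> pt -> R) : pt -> R :=
  fun x => - c I3 I1 I1 x + app (mD X I3) (mxi X) x.
Definition g23 (X : MC) (c : i3 -> i3 -> i3 -> pt -> R) : pt -> R :=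
  fun x => - c I1 I2 I1 x - app (mD X I2) (mxi X) x.

Definition D1' (X : MC) (u : pt -> R) (c : i3 -> i3 -> i3 -> pt -> R) : vf :=
  fun i x => mD X I1 i x
             - (2 * g34 X c x / (u x - 2)) * mD X I2 i x
             + (2 * u x * g23 X c x / (2 * u x - 1)) * mD X I3 i x.

Definition gbar (ub : pt -> R) : i3 -> pt -> R :=
  fun i x => match i with
             | I1 => 1/2
             | I2 => - (1/2) * (1 + ub x)
             | I3 => - (1/2) * (1 + / ub x)
             end.

Definition T1 (X : MC) (u : pt -> R) (c : i3 -> i3 -> i3 -> pt -> R) : MC :=
  let s := fun x => / (1 - u x) in
  mkMC (gbar (fun x => / u x - 1))
       (fun i => match i with
                 | I1 => scale s (mD X I2)
                 | I2 => scale s (mD X I3)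
                 | I3 => scale s (D1' X u c)
                 end)
       (fun x => mxi X x + ln (/ (1 - u x))).

Definition T2 (X : MC) (u : pt -> R) (c : i3 -> i3 -> i3 -> pt -> R) : MC :=
  let s := fun x => u x / (u x - 1) in
  mkMC (gbar (fun x => u x - 1))
       (fun i => match i with
                 | I1 => scale s (mD X I3)
                 | I2 => scale s (mD X I2)
                 | I3 => scale s (D1' X u c)
                 end)
       (fun x => mxi X x + ln (u x / (u x - 1))).

(* The new frame of T(X) is obtained from the old frame D by an
   invertible matrix M of smooth functions (E_m = sum_n M_mn D_n), with an
   explicit inverse N.  The structure functions of E are then given by an
   explicit formula in those of D and the derivatives D_n(M_kq) ("change of
   frame" lemma).  Equation (E1) for T(X) is a rational identity in u, and the
   three equations (E2) for T(X) reduce, after expanding the derivations by the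
   Leibniz and chain rules, to a rational identity in the structure functions,
   once the derivatives D_i(xi) are eliminated using (E2) for X, the derivative
   D_3(c_12^1) using the Jacobi identity, and D_3 D_2 xi using the bracket
   [D_2, D_3].  The consequence about B = N o T is immediate since N_rel Y Z
   already records that Z is normal. *)

From Pilot Require Import Defs.
From Stdlib Require Import Reals Lra ClassicalEpsilon FunctionalExtensionality.
Open Scope R_scope.

Lemma upd_same (x : pt) i : upd x i (x i) = x.
Proof. apply functional_extensionality; intro j; unfold upd; destruct j, i; reflexivity. Qed.

Lemma hp_add i f g x l1 l2 : has_partial i f x l1 -> has_partial i g x l2 ->
  has_partial i (fun y => f y + g y) x (l1 + l2).
Proof. unfold has_partial; intros H1 H2. exact (derivable_pt_lim_plus _ _ _ _ _ H1 H2). Qed.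

Lemma hp_mul i f g x l1 l2 : has_partial i f x l1 -> has_partial i g x l2 ->
  has_partial i (fun y => f y * g y) x (l1 * g x + f x * l2).
Proof.
  unfold has_partial; intros H1 H2.
  pose proof (derivable_pt_lim_mult _ _ _ _ _ H1 H2) as H. cbv beta in H.
  rewrite upd_same in H. exact H.
Qed.

Lemma hp_comp i f h x l dh : has_partial i f x l -> derivable_pt_lim h (f x) dh ->
  has_partial i (fun y => h (f y)) x (dh * l).
Proof.
  unfold has_partial; intros H1 H2.
  rewrite <- (upd_same x i) in H2 at 1.
  exact (derivable_pt_lim_comp _ _ _ _ _ H1 H2).
Qed.

Lemma hp_const i a x : has_partial i (fun _ => a) x 0.
Proof. unfold has_partial. exact (derivable_pt_lim_const a (x i)). Qed.

Lemma hp_coord i k x : has_partial i (fun y => y k) x (if i3_eqb k i then 1 else 0).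
Proof.
  unfold has_partial, upd. destruct i, k; simpl;
    first [exact (derivable_pt_lim_id _) | exact (derivable_pt_lim_const _ _)].
Qed.

Lemma pd_eq i f x l : has_partial i f x l -> pd i f x = l.
Proof.
  intro H. unfold pd.
  assert (H' : has_partial i f x (epsilon (inhabits 0) (fun l => has_partial i f x l))).
  { apply epsilon_spec. exists l; exact H. }
  exact (uniqueness_limite _ _ _ _ H' H).
Qed.

Lemma derive_inv a : a <> 0 -> derivable_pt_lim (fun t => / t) a (- (/ a * / a)).
Proof.
  intro Ha.
  pose proof (derivable_pt_lim_div (fct_cte 1) id a 0 1 (derivable_pt_lim_const 1 a)
     (derivable_pt_lim_id a) Ha) as H.
  apply (derivable_pt_lim_ext (fct_cte 1 / id)%F).
  { intro z. unfold div_fct, fct_cte, id. unfold Rdiv. ring. }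
  replace (- (/ a * / a)) with ((0 * id a - 1 * fct_cte 1 a) / (id a)²); [exact H|].
  unfold fct_cte, id, Rsqr. field. exact Ha.
Qed.

Lemma derive_quarter_square a : derivable_pt_lim (fun t => t * t / 4) a ((1 * a + a * 1) / 4).
Proof.
  exact (derivable_pt_lim_div_scal (id * id)%F a _ 4
    (derivable_pt_lim_mult id id a 1 1 (derivable_pt_lim_id a) (derivable_pt_lim_id a))).
Qed.

Lemma derive_opp a : derivable_pt_lim (fun t => - t) a (- 1).
Proof. exact (derivable_pt_lim_opp id a 1 (derivable_pt_lim_id a)). Qed.

Lemma cont3_const a : cont3 (fun _ => a).
Proof.
  intros x eps He. exists 1; split; [lra|].
  intros y _. unfold Rminus. rewrite Rplus_opp_r, Rabs_R0. exact He.
Qed.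

Lemma cont3_coord k : cont3 (fun y => y k).
Proof. intros x eps He. exists eps; split; [exact He|]. intros y Hy. apply Hy. Qed.

Lemma cont3_add f g : cont3 f -> cont3 g -> cont3 (fun y => f y + g y).
Proof.
  intros Hf Hg x eps He.
  destruct (Hf x (eps/2)) as [d1 [Hd1 H1]]; [lra|].
  destruct (Hg x (eps/2)) as [d2 [Hd2 H2]]; [lra|].
  exists (Rmin d1 d2); split; [apply Rmin_glb_lt; assumption|].
  intros y Hy.
  assert (A1 : Rabs (f y - f x) < eps/2).
  { apply H1; intro i; specialize (Hy i). pose proof (Rmin_l d1 d2); lra. }
  assert (A2 : Rabs (g y - g x) < eps/2).
  { apply H2; intro i; specialize (Hy i). pose proof (Rmin_r d1 d2); lra. }
  replace (f y + g y - (f x + g x)) with ((f y - f x) + (g y - g x)) by ring.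
  pose proof (Rabs_triang (f y - f x) (g y - g x)). lra.
Qed.

Lemma cont3_comp f h : cont3 f -> (forall x, exists dh, derivable_pt_lim h (f x) dh) ->
  cont3 (fun y => h (f y)).
Proof.
  intros Hf Hh x eps He.
  destruct (Hh x) as [dh Hd].
  assert (Hc : continuity_pt h (f x))
    by (apply derivable_continuous_pt; exact (exist _ dh Hd)).
  unfold continuity_pt, continue_in, limit1_in, limit_in in Hc.
  destruct (Hc eps He) as [alp [Ha Hal]].
  destruct (Hf x alp Ha) as [d [Hd0 Hdd]].
  exists d; split; [exact Hd0|]. intros y Hy.
  destruct (Req_dec (f y) (f x)) as [E|E].
  - rewrite E. unfold Rminus; rewrite Rplus_opp_r, Rabs_R0; exact He.
  - apply (Hal (f y)). split.
    + split; [exact I|]. intro E'; apply E; symmetry; exact E'.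
    + simpl. unfold R_dist. apply Hdd. exact Hy.
Qed.

Lemma cont3_opp f : cont3 f -> cont3 (fun y => - f y).
Proof. intro H. apply (cont3_comp f (fun t => - t) H). intro; eexists; apply derive_opp. Qed.

(* Products by polarisation: f g = ((f+g)^2 - (f-g)^2) / 4. *)
Lemma cont3_mul f g : cont3 f -> cont3 g -> cont3 (fun y => f y * g y).
Proof.
  intros Hf Hg.
  replace (fun y => f y * g y) with
    (fun y => (fun t => t * t / 4) (f y + g y) + - (fun t => t * t / 4) (f y + - g y)).
  2:{ apply functional_extensionality; intro y. field. }
  apply cont3_add.
  - apply (cont3_comp (fun y => f y + g y) (fun t => t * t / 4)); [apply cont3_add; assumption|].
    intro; eexists; apply derive_quarter_square.
  - apply cont3_opp. apply (cont3_comp (fun y => f y + - g y) (fun t => t * t / 4)).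
    + apply cont3_add; [assumption| apply cont3_opp; assumption].
    + intro; eexists; apply derive_quarter_square.
Qed.

Lemma Ck_mono n : forall f, Ck (S n) f -> Ck n f.
Proof.
  induction n; intros f H.
  - simpl in *. tauto.
  - destruct H as [Hc H]. split; [exact Hc|]. intro i. destruct (H i) as [H1 H2].
    split; [exact H1|]. apply IHn; exact H2.
Qed.

Lemma Ck_partial n f : Ck (S n) f -> forall i x, has_partial i f x (pd i f x).
Proof.
  intros [_ H] i x. destruct (H i) as [H1 _]. destruct (H1 x) as [l Hl].
  rewrite (pd_eq _ _ _ _ Hl). exact Hl.
Qed.

Lemma Ck_const n : forall a, Ck n (fun _ => a).
Proof.
  induction n; intro a.
  - apply cont3_const.
  - split; [apply cont3_const|]. intro i. split.
    + intro x; exists 0; apply hp_const.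
    + replace (pd i (fun _ => a)) with (fun _ : pt => 0); [apply IHn|].
      apply functional_extensionality; intro x. symmetry; apply pd_eq, hp_const.
Qed.

Lemma Ck_add n : forall f g, Ck n f -> Ck n g -> Ck n (fun y => f y + g y).
Proof.
  induction n; intros f g Hf Hg.
  - apply cont3_add; assumption.
  - pose proof (Ck_partial _ _ Hf) as Pf. pose proof (Ck_partial _ _ Hg) as Pg.
    destruct Hf as [Cf Hf]; destruct Hg as [Cg Hg].
    split; [apply cont3_add; assumption|]. intro i. split.
    + intro x; eexists; apply hp_add; [apply Pf|apply Pg].
    + replace (pd i (fun y => f y + g y)) with (fun y => pd i f y + pd i g y).
      * apply IHn; [apply (Hf i)|apply (Hg i)].
      * apply functional_extensionality; intro x.
        symmetry; apply pd_eq, hp_add; [apply Pf|apply Pg].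
Qed.

Lemma Ck_mul n : forall f g, Ck n f -> Ck n g -> Ck n (fun y => f y * g y).
Proof.
  induction n; intros f g Hf Hg.
  - apply cont3_mul; assumption.
  - pose proof (Ck_partial _ _ Hf) as Pf. pose proof (Ck_partial _ _ Hg) as Pg.
    pose proof (Ck_mono _ _ Hf) as Mf. pose proof (Ck_mono _ _ Hg) as Mg.
    destruct Hf as [Cf Hf]; destruct Hg as [Cg Hg].
    split; [apply cont3_mul; assumption|]. intro i. split.
    + intro x; eexists; apply hp_mul; [apply Pf|apply Pg].
    + replace (pd i (fun y => f y * g y)) with (fun y => pd i f y * g y + f y * pd i g y).
      * apply Ck_add; apply IHn; try assumption; [apply (Hf i)|apply (Hg i)].
      * apply functional_extensionality; intro x.
        symmetry; apply pd_eq, hp_mul; [apply Pf|apply Pg].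
Qed.

Lemma Ck_opp n f : Ck n f -> Ck n (fun y => - f y).
Proof.
  intro H. replace (fun y => - f y) with (fun y => (fun _ => -1) y * f y).
  - apply Ck_mul; [apply Ck_const|exact H].
  - apply functional_extensionality; intro; ring.
Qed.

Lemma Ck_inv n : forall f, Ck n f -> (forall y, f y <> 0) -> Ck n (fun y => / f y).
Proof.
  induction n; intros f Hf Hnz.
  - apply (cont3_comp f (fun t => / t)); [exact Hf|].
    intro x; eexists; apply derive_inv, Hnz.
  - pose proof (Ck_partial _ _ Hf) as Pf. pose proof (Ck_mono _ _ Hf) as Mf.
    assert (Hp : forall i x, has_partial i (fun y => / f y) x (- (/ f x * / f x) * pd i f x)).
    { intros i x. apply (hp_comp i f (fun t => / t)); [apply Pf| apply derive_inv, Hnz]. }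
    destruct Hf as [Cf Hf].
    split.
    + apply (cont3_comp f (fun t => / t)); [exact Cf|].
      intro x; eexists; apply derive_inv, Hnz.
    + intro i. split.
      * intro x; eexists; apply Hp.
      * replace (pd i (fun y => / f y)) with (fun y => - (/ f y * / f y) * pd i f y).
        -- apply Ck_mul; [apply Ck_opp, Ck_mul; apply IHn; assumption | apply (Hf i)].
        -- apply functional_extensionality; intro x. symmetry; apply pd_eq, Hp.
Qed.

Lemma Ck_ln n f : Ck n f -> (forall y, 0 < f y) -> Ck n (fun y => ln (f y)).
Proof.
  intros Hf Hpos. destruct n.
  - apply (cont3_comp f ln); [exact Hf|].
    intro x; eexists; apply derivable_pt_lim_ln, Hpos.
  - pose proof (Ck_partial _ _ Hf) as Pf. pose proof (Ck_mono _ _ Hf) as Mf.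
    assert (Hp : forall i x, has_partial i (fun y => ln (f y)) x (/ f x * pd i f x)).
    { intros i x. apply (hp_comp i f ln); [apply Pf| apply derivable_pt_lim_ln, Hpos]. }
    destruct Hf as [Cf Hf].
    split.
    + apply (cont3_comp f ln); [exact Cf|].
      intro x; eexists; apply derivable_pt_lim_ln, Hpos.
    + intro i. split.
      * intro x; eexists; apply Hp.
      * replace (pd i (fun y => ln (f y))) with (fun y => / f y * pd i f y).
        -- apply Ck_mul; [|apply (Hf i)].
           apply Ck_inv; [exact Mf| intro y; specialize (Hpos y); lra].
        -- apply functional_extensionality; intro x. symmetry; apply pd_eq, Hp.
Qed.

Lemma smooth_const a : smooth (fun _ => a).
Proof. intro n; apply Ck_const. Qed.

Lemma smooth_add f g : smooth f -> smooth g -> smooth (fun y => f y + g y).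
Proof. intros Hf Hg n; apply Ck_add; auto. Qed.

Lemma smooth_mul f g : smooth f -> smooth g -> smooth (fun y => f y * g y).
Proof. intros Hf Hg n; apply Ck_mul; auto. Qed.

Lemma smooth_opp f : smooth f -> smooth (fun y => - f y).
Proof. intros Hf n; apply Ck_opp; auto. Qed.

Lemma smooth_sub f g : smooth f -> smooth g -> smooth (fun y => f y - g y).
Proof. intros Hf Hg. exact (smooth_add _ _ Hf (smooth_opp _ Hg)). Qed.

Lemma smooth_inv f : smooth f -> (forall y, f y <> 0) -> smooth (fun y => / f y).
Proof. intros Hf Hnz n; apply Ck_inv; auto. Qed.

Lemma smooth_ln f : smooth f -> (forall y, 0 < f y) -> smooth (fun y => ln (f y)).
Proof. intros Hf Hp n; apply Ck_ln; auto. Qed.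

Lemma smooth_coord k : smooth (fun y => y k).
Proof.
  intros [|n]; [apply cont3_coord|].
  split; [apply cont3_coord|]. intro i. split.
  - intro x; eexists; apply hp_coord.
  - replace (pd i (fun y => y k)) with (fun _ : pt => if i3_eqb k i then 1 else 0);
      [apply Ck_const|].
    apply functional_extensionality; intro x. symmetry; apply pd_eq, hp_coord.
Qed.

Lemma smooth_pd i f : smooth f -> smooth (pd i f).
Proof. intros H n. destruct (H (S n)) as [_ H']. apply (H' i). Qed.

Lemma smooth_partial f : smooth f -> forall i x, has_partial i f x (pd i f x).
Proof. intros H. apply (Ck_partial 0), H. Qed.

Lemma smooth_app V f : smooth_vf V -> smooth f -> smooth (app V f).
Proof.
  intros HV Hf. unfold app, sum3.
  repeat apply smooth_add; apply smooth_mul; try apply HV; apply smooth_pd; exact Hf.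
Qed.

Lemma pd_add i f g x : smooth f -> smooth g ->
  pd i (fun y => f y + g y) x = pd i f x + pd i g x.
Proof. intros Hf Hg; apply pd_eq, hp_add; apply smooth_partial; assumption. Qed.

Lemma pd_mul i f g x : smooth f -> smooth g ->
  pd i (fun y => f y * g y) x = pd i f x * g x + f x * pd i g x.
Proof. intros Hf Hg; apply pd_eq, hp_mul; apply smooth_partial; assumption. Qed.

Lemma pd_opp i f x : smooth f -> pd i (fun y => - f y) x = - pd i f x.
Proof.
  intros Hf. rewrite (pd_eq i _ x (-1 * pd i f x)); [ring|].
  apply (hp_comp i f (fun t => - t)); [apply smooth_partial, Hf| apply derive_opp].
Qed.

Lemma pd_inv i f x : smooth f -> f x <> 0 ->
  pd i (fun y => / f y) x = - (pd i f x / (f x * f x)).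
Proof.
  intros Hf Hnz. rewrite (pd_eq i _ x (- (/ f x * / f x) * pd i f x)).
  - field; exact Hnz.
  - apply (hp_comp i f (fun t => / t)); [apply smooth_partial, Hf| apply derive_inv, Hnz].
Qed.

Lemma pd_ln i f x : smooth f -> 0 < f x -> pd i (fun y => ln (f y)) x = pd i f x / f x.
Proof.
  intros Hf Hp. rewrite (pd_eq i _ x (/ f x * pd i f x)).
  - unfold Rdiv; ring.
  - apply (hp_comp i f ln); [apply smooth_partial, Hf| apply derivable_pt_lim_ln, Hp].
Qed.

Lemma app_ext V F x (L : i3 -> R) : (forall i, pd i F x = L i) ->
  app V F x = sum3 (fun i => V i x * L i).
Proof. intro H. unfold app, sum3. rewrite !H. reflexivity. Qed.

Lemma app_add V f g x : smooth f -> smooth g ->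
  app V (fun y => f y + g y) x = app V f x + app V g x.
Proof.
  intros Hf Hg. rewrite (app_ext V _ x (fun i => pd i f x + pd i g x)).
  - unfold app, sum3; ring.
  - intro; apply pd_add; assumption.
Qed.

Lemma app_opp V f x : smooth f -> app V (fun y => - f y) x = - app V f x.
Proof.
  intros Hf. rewrite (app_ext V _ x (fun i => - pd i f x)).
  - unfold app, sum3; ring.
  - intro; apply pd_opp; assumption.
Qed.

Lemma app_sub V f g x : smooth f -> smooth g ->
  app V (fun y => f y - g y) x = app V f x - app V g x.
Proof.
  intros Hf Hg. unfold Rminus. rewrite app_add; [|exact Hf|apply smooth_opp, Hg].
  rewrite app_opp by exact Hg. reflexivity.
Qed.

Lemma app_mul V f g x : smooth f -> smooth g ->
  app V (fun y => f y * g y) x = app V f x * g x + f x * app V g x.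
Proof.
  intros Hf Hg. rewrite (app_ext V _ x (fun i => pd i f x * g x + f x * pd i g x)).
  - unfold app, sum3; ring.
  - intro; apply pd_mul; assumption.
Qed.

Lemma app_const V a x : app V (fun _ => a) x = 0.
Proof.
  rewrite (app_ext V _ x (fun i => 0)).
  - unfold sum3; ring.
  - intro; apply pd_eq, hp_const.
Qed.

Lemma app_inv V f x : smooth f -> f x <> 0 ->
  app V (fun y => / f y) x = - (app V f x / (f x * f x)).
Proof.
  intros Hf Hnz. rewrite (app_ext V _ x (fun i => - (pd i f x / (f x * f x)))).
  - unfold app, sum3; field; exact Hnz.
  - intro; apply pd_inv; assumption.
Qed.

Lemma app_ln V f x : smooth f -> 0 < f x -> app V (fun y => ln (f y)) x = app V f x / f x.
Proof.
  intros Hf Hp. rewrite (app_ext V _ x (fun i => pd i f x / f x)).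
  - unfold app, sum3; field; lra.
  - intro; apply pd_ln; assumption.
Qed.

Lemma app_coord V k x : app V (fun y => y k) x = V k x.
Proof.
  rewrite (app_ext V _ x (fun i => if i3_eqb k i then 1 else 0)).
  - unfold sum3; destruct k; simpl; ring.
  - intro; apply pd_eq, hp_coord.
Qed.

Lemma app_sum3 V (F : i3 -> pt -> R) x : (forall p, smooth (F p)) ->
  app V (fun y => sum3 (fun p => F p y)) x = sum3 (fun p => app V (F p) x).
Proof. intro H. unfold sum3 at 1. rewrite app_add, app_add; try apply smooth_add; auto. Qed.

Lemma sum3_ext (F G : i3 -> R) : (forall i, F i = G i) -> sum3 F = sum3 G.
Proof. intro H; unfold sum3; rewrite !H; reflexivity. Qed.

(* In a frame, a combination sum_m a_m D_m that kills every smooth function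
   (in particular every coordinate) has zero coefficients. *)
Lemma frame_coef_zero D x (a : i3 -> R) : frame D ->
  (forall f, smooth f -> sum3 (fun m => a m * app (D m) f x) = 0) -> forall m, a m = 0.
Proof.
  intros Hfr H. apply (Hfr x a). intro i.
  rewrite <- (H (fun y => y i) (smooth_coord i)).
  apply sum3_ext; intro m; rewrite app_coord; reflexivity.
Qed.

Lemma struct_antisym D c : is_struct D c -> frame D -> forall j k l x, c k j l x = - c j k l x.
Proof.
  intros [_ Hb] Hfr j k l x.
  assert (H : forall m, c k j m x + c j k m x = 0).
  { apply (frame_coef_zero D x (fun m => c k j m x + c j k m x) Hfr). intros f Hf.
    transitivity (sum3 (fun i => c k j i x * app (D i) f x)
                  + sum3 (fun i => c j k i x * app (D i) f x)).
    - unfold sum3; ring.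
    - rewrite <- !Hb by exact Hf. ring. }
  specialize (H l). lra.
Qed.

Lemma struct_unique D c c0 : frame D -> is_struct D c -> is_struct D c0 ->
  forall j k l x, c0 j k l x = c j k l x.
Proof.
  intros Hfr [_ H1] [_ H2] j k l x.
  assert (H : forall m, c0 j k m x - c j k m x = 0).
  { apply (frame_coef_zero D x (fun m => c0 j k m x - c j k m x) Hfr). intros f Hf.
    transitivity (sum3 (fun i => c0 j k i x * app (D i) f x)
                  - sum3 (fun i => c j k i x * app (D i) f x)).
    - unfold sum3; ring.
    - rewrite <- H1, <- H2 by exact Hf. ring. }
  specialize (H l). lra.
Qed.

Section Jacobi.
Variables (D : i3 -> vf) (c : i3 -> i3 -> i3 -> pt -> R).
Hypothesis Hs : is_struct D c.
Hypothesis HD : forall i, smooth_vf (D i).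

Lemma double_bracket f x i j k : smooth f ->
  (app (D i) (app (D j) (app (D k) f)) x - app (D i) (app (D k) (app (D j) f)) x)
  - (app (D j) (app (D k) (app (D i) f)) x - app (D k) (app (D j) (app (D i) f)) x)
  = sum3 (fun m => (app (D i) (c j k m) x + sum3 (fun l => c j k l x * c i l m x))
                   * app (D m) f x).
Proof.
  intro Hf. destruct Hs as [Hc Hb].
  assert (Sa : forall a g, smooth g -> smooth (app (D a) g)) by (intros; apply smooth_app; auto).
  rewrite <- app_sub by (apply Sa, Sa, Hf).
  replace (fun y => app (D j) (app (D k) f) y - app (D k) (app (D j) f) y)
    with (fun y => sum3 (fun l => c j k l y * app (D l) f y))
    by (apply functional_extensionality; intro y; symmetry; apply Hb, Hf).
  rewrite app_sum3 by (intro p; apply smooth_mul; [apply Hc| apply Sa, Hf]).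
  rewrite (Hb j k (app (D i) f) (Sa _ _ Hf) x).
  assert (Z : forall l, app (D i) (app (D l) f) x - app (D l) (app (D i) f) x
                        - sum3 (fun m => c i l m x * app (D m) f x) = 0)
    by (intro l; rewrite (Hb i l f Hf x); ring).
  rewrite !(sum3_ext _ _ (fun l => app_mul (D i) _ _ x (Hc j k l) (Sa l f Hf))).
  pose proof (Z I1) as Z1; pose proof (Z I2) as Z2; pose proof (Z I3) as Z3.
  unfold sum3 in *. nra.
Qed.

Lemma jacobi : frame D -> forall m x,
  app (D I1) (c I2 I3 m) x + app (D I2) (c I3 I1 m) x + app (D I3) (c I1 I2 m) x
  + sum3 (fun l => c I2 I3 l x * c I1 l m x) + sum3 (fun l => c I3 I1 l x * c I2 l m x)
  + sum3 (fun l => c I1 I2 l x * c I3 l m x) = 0.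
Proof.
  intros Hfr m x.
  set (a := fun m => app (D I1) (c I2 I3 m) x + app (D I2) (c I3 I1 m) x
    + app (D I3) (c I1 I2 m) x + sum3 (fun l => c I2 I3 l x * c I1 l m x)
    + sum3 (fun l => c I3 I1 l x * c I2 l m x) + sum3 (fun l => c I1 I2 l x * c I3 l m x)).
  change (a m = 0). apply (frame_coef_zero D x a Hfr). intros f Hf.
  pose proof (double_bracket f x I1 I2 I3 Hf) as J1.
  pose proof (double_bracket f x I2 I3 I1 Hf) as J2.
  pose proof (double_bracket f x I3 I1 I2 Hf) as J3.
  unfold a, sum3 in *. lra.
Qed.
End Jacobi.

Definition frame_change (E D : i3 -> vf) (M : i3 -> i3 -> pt -> R) : Prop :=
  forall m j x, E m j x = sum3 (fun n => M m n x * D n j x).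

Definition mx_left_inverse (N M : i3 -> i3 -> pt -> R) : Prop :=
  forall q p x, sum3 (fun l => N q l x * M l p x) = if i3_eqb q p then 1 else 0.

(* The structure functions of the new frame, written in the old frame:
   [E_j, E_k] = sum_q (sum_np M_jn M_kp c_np^q + E_j(M_kq) - E_k(M_jq)) D_q
   and D_q = sum_l N_ql E_l. *)
Definition new_struct (D : i3 -> vf) (M N : i3 -> i3 -> pt -> R)
  (c : i3 -> i3 -> i3 -> pt -> R) : i3 -> i3 -> i3 -> pt -> R :=
  fun j k l x => sum3 (fun q =>
    (sum3 (fun n => sum3 (fun p => M j n x * M k p x * c n p q x))
     + sum3 (fun n => M j n x * app (D n) (M k q) x)
     - sum3 (fun n => M k n x * app (D n) (M j q) x)) * N q l x).

Section FrameChange.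
Variables (E D : i3 -> vf) (M N : i3 -> i3 -> pt -> R) (c : i3 -> i3 -> i3 -> pt -> R).
Hypothesis HED : frame_change E D M.
Hypothesis HM : forall m n, smooth (M m n).

Lemma frame_change_app m f x : app (E m) f x = sum3 (fun n => M m n x * app (D n) f x).
Proof. unfold app, sum3. rewrite !HED. unfold sum3. ring. Qed.

Lemma frame_change_smooth : (forall i, smooth_vf (D i)) -> forall i, smooth_vf (E i).
Proof.
  intros HD m j.
  replace (E m j) with (fun x => sum3 (fun n => M m n x * D n j x))
    by (apply functional_extensionality; intro x; symmetry; apply HED).
  unfold sum3. repeat apply smooth_add; apply smooth_mul; auto; apply HD.
Qed.

Lemma frame_change_frame : mx_left_inverse M N -> frame D -> frame E.
Proof.
  intros HMN Hfr x a Ha.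
  pose (b n := sum3 (fun j => a j * M j n x)).
  assert (Hb : forall n, b n = 0).
  { apply (Hfr x b). intro i. rewrite <- (Ha i). unfold b, sum3. rewrite !HED. unfold sum3. ring. }
  intro p.
  transitivity (sum3 (fun l => b l * N l p x)).
  - transitivity (sum3 (fun j => a j * sum3 (fun l => M j l x * N l p x))).
    + unfold sum3 at 1. rewrite !HMN. destruct p; simpl; ring.
    + unfold b, sum3; ring.
  - unfold sum3 at 1. rewrite !Hb. ring.
Qed.

Lemma app_app_frame_change j k f x : (forall i, smooth_vf (D i)) -> smooth f ->
  app (E j) (app (E k) f) x = sum3 (fun n => M j n x *
    sum3 (fun p => app (D n) (M k p) x * app (D p) f x + M k p x * app (D n) (app (D p) f) x)).
Proof.
  intros HD Hf. rewrite frame_change_app. apply sum3_ext; intro n. f_equal.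
  replace (app (E k) f) with (fun y => sum3 (fun p => M k p y * app (D p) f y))
    by (apply functional_extensionality; intro y; symmetry; apply frame_change_app).
  rewrite app_sum3 by (intro p; apply smooth_mul; [apply HM | apply smooth_app; auto]).
  apply sum3_ext; intro p. apply app_mul; [apply HM | apply smooth_app; auto].
Qed.

Lemma frame_change_struct : is_struct D c -> (forall i, smooth_vf (D i)) -> frame D ->
  (forall q l, smooth (N q l)) -> mx_left_inverse N M -> is_struct E (new_struct D M N c).
Proof.
  intros [Hc Hb] HD Hfr HN HNM. split.
  - intros j k l. unfold new_struct, sum3.
    repeat first [apply smooth_app | apply smooth_add | apply smooth_sub | apply smooth_opp | apply smooth_mul
                 | apply HM | apply HN | apply Hc | apply HD].
  - intros j k f Hf x.
    rewrite !app_app_frame_change by assumption.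
    (* D_q = sum_l N_ql E_l collapses the right-hand side *)
    transitivity (sum3 (fun q =>
      (sum3 (fun n => sum3 (fun p => M j n x * M k p x * c n p q x))
       + sum3 (fun n => M j n x * app (D n) (M k q) x)
       - sum3 (fun n => M k n x * app (D n) (M j q) x)) * app (D q) f x)).
    + assert (Hbr : forall n p, app (D n) (app (D p) f) x
                      = app (D p) (app (D n) f) x + sum3 (fun q => c n p q x * app (D q) f x))
        by (intros n p; rewrite <- (Hb n p f Hf x); ring).
      assert (Hanti : forall n p q, c p n q x = - c n p q x)
        by (intros; apply (struct_antisym D c (conj Hc Hb) Hfr)).
      assert (Hdiag : forall n q, c n n q x = 0) by (intros n q; pose proof (Hanti n n q); lra).
      unfold sum3. rewrite (Hbr I2 I1), (Hbr I3 I1), (Hbr I3 I2).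
      unfold sum3. rewrite !Hdiag, !(Hanti I1 I2), !(Hanti I1 I3), !(Hanti I2 I3). ring.
    + transitivity (sum3 (fun q => (sum3 (fun n => sum3 (fun p => M j n x * M k p x * c n p q x))
       + sum3 (fun n => M j n x * app (D n) (M k q) x)
       - sum3 (fun n => M k n x * app (D n) (M j q) x)) *
         sum3 (fun p => sum3 (fun l => N q l x * M l p x) * app (D p) f x))).
      * apply sum3_ext; intro q. f_equal.
        unfold sum3 at 1. rewrite !HNM. destruct q; simpl; unfold sum3; ring.
      * rewrite (sum3_ext (fun l => new_struct D M N c j k l x * app (E l) f x)
          (fun l => new_struct D M N c j k l x * sum3 (fun n => M l n x * app (D n) f x)))
          by (intro l; rewrite frame_change_app; reflexivity).
        unfold new_struct, sum3; ring.
Qed.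
End FrameChange.

Lemma MC_pre_of_frame_change (Y : MC) (D : i3 -> vf) (c : i3 -> i3 -> i3 -> pt -> R)
  (M N : i3 -> i3 -> pt -> R) :
  is_struct D c -> (forall i, smooth_vf (D i)) -> frame D ->
  frame_change (mD Y) D M -> (forall m n, smooth (M m n)) -> (forall m n, smooth (N m n)) ->
  mx_left_inverse N M -> mx_left_inverse M N ->
  (forall i, smooth (mg Y i)) -> smooth (mxi Y) -> (forall x, Defs.E1 Y x) ->
  (forall i x, E2 Y (new_struct D M N c) i x) -> MC_pre Y.
Proof.
  intros Hs HD Hfr HYD HM HN HNM HMN Hg Hxi HE1 HE2.
  repeat split; try assumption.
  - exact (frame_change_smooth _ _ _ HYD HM HD).
  - exact (frame_change_frame _ _ _ _ HYD HMN Hfr).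
  - exists (new_struct D M N c). split; [|exact HE2].
    exact (frame_change_struct _ _ _ _ _ HYD HM Hs HD Hfr HN HNM).
Qed.

Create HintDb nonzero.

Section NormalTuple.
Variables (X : MC) (u : pt -> R) (c : i3 -> i3 -> i3 -> pt -> R).
Hypothesis Hs : is_struct (mD X) c.
Hypothesis HD : forall i, smooth_vf (mD X i).
Hypothesis Hfr : frame (mD X).
Hypothesis Hxi : smooth (mxi X).
Hypothesis Hu : smooth u.
Hypothesis u_pos : forall y, 0 < u y.
Hypothesis Hg1 : mg X I1 = fun _ => 1/2.
Hypothesis Hg2 : mg X I2 = fun y => 1/2 * (-1 - u y).
Hypothesis Hg3 : mg X I3 = fun y => 1/2 * (-1 - / u y).
Hypothesis HE2 : forall i x, E2 X c i x.
Hypothesis Hc231 : forall x, c I2 I3 I1 x = -2.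

Lemma u_neq0 y : u y <> 0. Proof. specialize (u_pos y); lra. Qed.
Lemma u_add1_neq0 y : u y + 1 <> 0. Proof. specialize (u_pos y); lra. Qed.
#[local] Hint Resolve u_neq0 u_add1_neq0 : nonzero.

Lemma struct_smooth j k l : smooth (c j k l).
Proof. apply Hs. Qed.

Ltac nonzero := cbv beta; solve [auto with nonzero].
Ltac smooth_tac := repeat first
  [ assumption | apply smooth_const | apply smooth_app | apply struct_smooth | apply HD
  | apply smooth_add | apply smooth_sub | apply smooth_opp | apply smooth_mul
  | apply smooth_inv | apply smooth_ln | (intro; nonzero) ].
Ltac side := first [ solve [smooth_tac] | nonzero ].
Ltac push := repeat first
  [ rewrite app_const | rewrite app_add by side | rewrite app_sub by side
  | rewrite app_opp by side | rewrite app_mul by side | rewrite app_inv by side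
  | rewrite app_ln by side ].
Ltac push_in H := repeat first
  [ rewrite app_const in H | rewrite app_add in H by side | rewrite app_sub in H by side
  | rewrite app_opp in H by side | rewrite app_mul in H by side | rewrite app_inv in H by side
  | rewrite app_ln in H by side ].

Lemma c21 l y : c I2 I1 l y = - c I1 I2 l y. Proof. apply (struct_antisym _ _ Hs Hfr). Qed.
Lemma c32 l y : c I3 I2 l y = - c I2 I3 l y. Proof. apply (struct_antisym _ _ Hs Hfr). Qed.
Lemma c13 l y : c I1 I3 l y = - c I3 I1 l y. Proof. apply (struct_antisym _ _ Hs Hfr). Qed.
Lemma c_diag j l y : c j j l y = 0.
Proof. pose proof (struct_antisym _ _ Hs Hfr j j l y). lra. Qed.
Lemma c231_const : c I2 I3 I1 = fun _ => -2.
Proof. apply functional_extensionality; apply Hc231. Qed.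

Ltac canon := repeat first [rewrite c21 | rewrite c32 | rewrite c13 | rewrite c_diag | rewrite Hc231].
Ltac canon_in H :=
  repeat first [rewrite c21 in H | rewrite c32 in H | rewrite c13 in H | rewrite c_diag in H
               | rewrite Hc231 in H].

(* (E2) for X, solved for D_i(xi); all g_i are nonzero since u > 0. *)
Lemma xi_derivative i x : app (mD X i) (mxi X) x =
  (app (mD X i) (fun y => mg X (next i) y + mg X (next (next i)) y) x
   + c i (next i) (next i) x * (mg X i x - mg X (next i) x)
   + c i (next (next i)) (next (next i)) x * (mg X i x - mg X (next (next i)) x))
  / (2 * mg X i x).
Proof.
  pose proof (HE2 i x) as E. unfold E2 in E.
  assert (Hgi : 2 * mg X i x <> 0).
  { specialize (u_pos x). pose proof (Rinv_0_lt_compat (u x) u_pos).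
    destruct i; simpl; rewrite ?Hg1, ?Hg2, ?Hg3; lra. }
  apply (Rmult_eq_reg_r (2 * mg X i x)); [|exact Hgi].
  unfold Rdiv. rewrite Rmult_assoc, Rinv_l, Rmult_1_r by exact Hgi.
  simpl in E |- *. lra.
Qed.

Lemma jacobi_c121 x : app (mD X I3) (c I1 I2 I1) x =
  - (app (mD X I1) (c I2 I3 I1) x + app (mD X I2) (c I3 I1 I1) x
     + sum3 (fun l => c I2 I3 l x * c I1 l I1 x) + sum3 (fun l => c I3 I1 l x * c I2 l I1 x)
     + sum3 (fun l => c I1 I2 l x * c I3 l I1 x)).
Proof. pose proof (jacobi _ _ Hs HD Hfr I1 x). lra. Qed.

Lemma bracket_xi x : app (mD X I3) (app (mD X I2) (mxi X)) x =
  app (mD X I2) (app (mD X I3) (mxi X)) x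
  - sum3 (fun i => c I2 I3 i x * app (mD X i) (mxi X) x).
Proof. destruct Hs as [_ Hb]. rewrite <- (Hb I2 I3 (mxi X) Hxi x). ring. Qed.

Ltac prepare x :=
  pose proof (xi_derivative I1 x) as HX1; pose proof (xi_derivative I2 x) as HX2;
  pose proof (xi_derivative I3 x) as HX3;
  simpl in HX1, HX2, HX3; rewrite ?Hg1, ?Hg2, ?Hg3 in HX1, HX2, HX3; cbv beta in HX1, HX2, HX3;
  push_in HX1; push_in HX2; push_in HX3; canon_in HX1; canon_in HX2; canon_in HX3;
  pose proof (jacobi_c121 x) as HJx; rewrite c231_const in HJx; push_in HJx;
  unfold sum3 in HJx; canon_in HJx;
  pose proof (bracket_xi x) as HCx; unfold sum3 in HCx; canon_in HCx.

Section Case1.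
Hypothesis u_range : forall y, 0 < u y < 1 /\ u y <> 1/2.

Lemma one_sub_u_neq0 y : 1 - u y <> 0. Proof. specialize (u_range y); lra. Qed.
Lemma u_sub2_neq0_lt1 y : u y - 2 <> 0. Proof. specialize (u_range y); lra. Qed.
Lemma two_u_sub1_neq0_lt1 y : 2 * u y - 1 <> 0. Proof. specialize (u_range y); lra. Qed.
Lemma inv_u_sub1_neq0 y : / u y - 1 <> 0.
Proof.
  specialize (u_range y). intro H. assert (E : u y * (/ u y - 1) = 0) by (rewrite H; ring).
  rewrite Rmult_minus_distr_l, Rinv_r in E by lra. lra.
Qed.
Lemma inv_one_sub_u_pos y : 0 < / (1 - u y).
Proof. specialize (u_range y). apply Rinv_0_lt_compat; lra. Qed.
#[local] Hint Resolve one_sub_u_neq0 u_sub2_neq0_lt1 two_u_sub1_neq0_lt1 inv_u_sub1_neq0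
  inv_one_sub_u_pos : nonzero.

Definition M1 : i3 -> i3 -> pt -> R := fun m n => match m, n with
  | I1, I2 | I2, I3 | I3, I1 => fun x => / (1 - u x)
  | I3, I2 => fun x => / (1 - u x) * - (2 * g34 X c x / (u x - 2))
  | I3, I3 => fun x => / (1 - u x) * (2 * u x * g23 X c x / (2 * u x - 1))
  | _, _ => fun _ => 0 end.
Definition N1 : i3 -> i3 -> pt -> R := fun q l => match q, l with
  | I1, I1 => fun x => 2 * g34 X c x / (u x - 2) * (1 - u x)
  | I1, I2 => fun x => - (2 * u x * g23 X c x / (2 * u x - 1)) * (1 - u x)
  | I1, I3 | I2, I1 | I3, I2 => fun x => 1 - u x
  | _, _ => fun _ => 0 end.

Lemma T1_frame_change : frame_change (mD (T1 X u c)) (mD X) M1.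
Proof. intros m j x. destruct m; unfold sum3, T1, scale, D1'; simpl; ring. Qed.

Lemma N1_M1 : mx_left_inverse N1 M1.
Proof.
  intros q p x. pose proof (one_sub_u_neq0 x); pose proof (u_sub2_neq0_lt1 x);
    pose proof (two_u_sub1_neq0_lt1 x).
  destruct q, p; unfold sum3; simpl; field; auto.
Qed.

Lemma M1_N1 : mx_left_inverse M1 N1.
Proof.
  intros q p x. pose proof (one_sub_u_neq0 x); pose proof (u_sub2_neq0_lt1 x);
    pose proof (two_u_sub1_neq0_lt1 x).
  destruct q, p; unfold sum3; simpl; field; auto.
Qed.

Lemma T1_E2 i x : E2 (T1 X u c) (new_struct (mD X) M1 N1 c) i x.
Proof.
  prepare x.
  unfold E2, new_struct. rewrite !(frame_change_app _ _ _ T1_frame_change).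
  destruct i; simpl; unfold sum3; simpl.
  all: rewrite ?c231_const; unfold g34, g23, Rdiv; cbv beta; push.
  all: canon; rewrite ?HJx, ?HCx, ?HX1, ?HX2, ?HX3.
  all: pose proof (u_neq0 x); pose proof (one_sub_u_neq0 x); pose proof (u_sub2_neq0_lt1 x);
       pose proof (two_u_sub1_neq0_lt1 x); pose proof (inv_u_sub1_neq0 x); pose proof (u_add1_neq0 x).
  all: field; repeat split; auto; specialize (u_range x); lra.
Qed.

Lemma T1_pre : MC_pre (T1 X u c).
Proof.
  apply (MC_pre_of_frame_change _ (mD X) c M1 N1); auto.
  - exact T1_frame_change.
  - intros m n; destruct m, n; simpl; unfold g34, g23; smooth_tac.
  - intros m n; destruct m, n; simpl; unfold g34, g23; smooth_tac.
  - exact N1_M1.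
  - exact M1_N1.
  - intro i; destruct i; simpl; smooth_tac.
  - simpl; smooth_tac.
  - intro x; unfold Defs.E1; simpl. pose proof (inv_u_sub1_neq0 x).
    field; split; [apply u_neq0 | apply one_sub_u_neq0].
  - exact T1_E2.
Qed.
End Case1.

Section Case2.
Hypothesis u_range : forall y, 1 < u y /\ u y <> 2.

Lemma u_sub1_neq0 y : u y - 1 <> 0. Proof. specialize (u_range y); lra. Qed.
Lemma u_sub2_neq0_gt1 y : u y - 2 <> 0. Proof. destruct (u_range y) as [_ H]; lra. Qed.
Lemma two_u_sub1_neq0_gt1 y : 2 * u y - 1 <> 0. Proof. specialize (u_range y); lra. Qed.
Lemma u_div_u_sub1_pos y : 0 < u y * / (u y - 1).
Proof.
  specialize (u_range y). apply Rmult_lt_0_compat; [lra|apply Rinv_0_lt_compat; lra].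
Qed.
#[local] Hint Resolve u_sub1_neq0 u_sub2_neq0_gt1 two_u_sub1_neq0_gt1 u_div_u_sub1_pos : nonzero.

Definition M2 : i3 -> i3 -> pt -> R := fun m n => match m, n with
  | I1, I3 | I2, I2 | I3, I1 => fun x => u x / (u x - 1)
  | I3, I2 => fun x => u x / (u x - 1) * - (2 * g34 X c x / (u x - 2))
  | I3, I3 => fun x => u x / (u x - 1) * (2 * u x * g23 X c x / (2 * u x - 1))
  | _, _ => fun _ => 0 end.
Definition N2 : i3 -> i3 -> pt -> R := fun q l => match q, l with
  | I1, I1 => fun x => - (2 * u x * g23 X c x / (2 * u x - 1)) * ((u x - 1) / u x)
  | I1, I2 => fun x => 2 * g34 X c x / (u x - 2) * ((u x - 1) / u x)
  | I1, I3 | I2, I2 | I3, I1 => fun x => (u x - 1) / u x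
  | _, _ => fun _ => 0 end.

Lemma T2_frame_change : frame_change (mD (T2 X u c)) (mD X) M2.
Proof. intros m j x. destruct m; unfold sum3, T2, scale, D1'; simpl; ring. Qed.

Lemma N2_M2 : mx_left_inverse N2 M2.
Proof.
  intros q p x. pose proof (u_neq0 x); pose proof (u_sub1_neq0 x);
    pose proof (u_sub2_neq0_gt1 x); pose proof (two_u_sub1_neq0_gt1 x).
  destruct q, p; unfold sum3; simpl; field; auto.
Qed.

Lemma M2_N2 : mx_left_inverse M2 N2.
Proof.
  intros q p x. pose proof (u_neq0 x); pose proof (u_sub1_neq0 x);
    pose proof (u_sub2_neq0_gt1 x); pose proof (two_u_sub1_neq0_gt1 x).
  destruct q, p; unfold sum3; simpl; field; auto.
Qed.

Lemma T2_E2 i x : E2 (T2 X u c) (new_struct (mD X) M2 N2 c) i x.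
Proof.
  prepare x.
  unfold E2, new_struct. rewrite !(frame_change_app _ _ _ T2_frame_change).
  destruct i; simpl; unfold sum3; simpl.
  all: rewrite ?c231_const; unfold g34, g23, Rdiv; cbv beta; push.
  all: canon; rewrite ?HJx, ?HCx, ?HX1, ?HX2, ?HX3.
  all: pose proof (u_neq0 x); pose proof (u_sub1_neq0 x); pose proof (u_sub2_neq0_gt1 x);
       pose proof (two_u_sub1_neq0_gt1 x); pose proof (u_add1_neq0 x).
  all: field; repeat split; auto; specialize (u_range x); lra.
Qed.

Lemma T2_pre : MC_pre (T2 X u c).
Proof.
  apply (MC_pre_of_frame_change _ (mD X) c M2 N2); auto.
  - exact T2_frame_change.
  - intros m n; destruct m, n; simpl; unfold g34, g23; smooth_tac.
  - intros m n; destruct m, n; simpl; unfold g34, g23; smooth_tac.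
  - exact N2_M2.
  - exact M2_N2.
  - intro i; destruct i; simpl; smooth_tac.
  - simpl; unfold Rdiv; smooth_tac.
  - intro x; unfold Defs.E1; simpl. pose proof (u_sub1_neq0 x). field; auto.
  - exact T2_E2.
Qed.
End Case2.
End NormalTuple.

Lemma normal_tuple_data (X : MC) (u : pt -> R) (c : i3 -> i3 -> i3 -> pt -> R) :
  MC_normal X -> (forall x, mg X I2 x = 1/2 * (-1 - u x)) -> is_struct (mD X) c ->
  (forall i, smooth_vf (mD X i)) /\ frame (mD X) /\ smooth (mxi X) /\
  smooth u /\ (forall y, 0 < u y) /\
  mg X I1 = (fun _ => 1/2) /\ mg X I2 = (fun y => 1/2 * (-1 - u y)) /\
  mg X I3 = (fun y => 1/2 * (-1 - / u y)) /\
  (forall i x, E2 X c i x) /\ (forall x, c I2 I3 I1 x = -2).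
Proof.
  intros [[_ [Hxi [HD [Hfr [_ [c0 [Hs0 HE2]]]]]]] [[u0 [Hu0 [Hpos Hg]]] Hc231]] Hg2 Hs.
  assert (Eu : u = u0).
  { apply functional_extensionality; intro x.
    pose proof (Hg2 x). destruct (Hg x) as [_ [H2 _]]. lra. }
  subst u0.
  repeat split; auto; try (apply functional_extensionality; intro x; apply (Hg x)).
  intros i x. pose proof (HE2 i x) as H. unfold E2 in *.
  rewrite !(struct_unique _ _ _ Hfr Hs Hs0) in H. exact H.
Qed.

Lemma N_rel_normal (Y Z : MC) : N_rel Y Z -> MC_normal Z.
Proof. intros (_ & _ & _ & _ & _ & _ & _ & _ & _ & _ & _ & _ & HZ). exact HZ. Qed.

Theorem theorem6p10 (X : MC) (u : pt -> R) (c : i3 -> i3 -> i3 -> pt -> R) :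
  MC_normal X ->
  (forall x, mg X I2 x = 1/2 * (-1 - u x)) ->
  is_struct (mD X) c ->
  ((forall x, 0 < u x < 1 /\ u x <> 1/2) ->
     MC_pre (T1 X u c) /\ (forall Z, N_rel (T1 X u c) Z -> MC_normal Z)) /\
  ((forall x, 1 < u x /\ u x <> 2) ->
     MC_pre (T2 X u c) /\ (forall Z, N_rel (T2 X u c) Z -> MC_normal Z)).
Proof.
  intros HN Hu2 Hs.
  destruct (normal_tuple_data X u c HN Hu2 Hs)
    as (HD & Hfr & Hxi & Hu & Hpos & Hg1 & Hg2 & Hg3 & HE2 & Hc231).
  split; intro Hrange; (split; [|exact (N_rel_normal _)]).
  - apply T1_pre; assumption.
  - apply T2_pre; assumption.
Qed.
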